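(* Let $Y$ be a complete toric variety with fan $\Sigma_Y$, and let $\Sigma_Y(1)=E_1\sqcup\dots\sqcup E_r\sqcup F$ be a Fano nef partition. Then the rays in $\bigcup_{i=1}^rE_i$ are exactly the rays of a single cone $\sigma\in\Sigma_Y$, and $\sigma$ is a Gorenstein cone, i.e. there is a linear function on $\sigma$ taking the value $1$ on every primitive ray generator of $\sigma$.
   Context: For a set $E$ of rays of $\Sigma_Y$ write $D_E=\sum_{\rho\in E}D_\rho$ for the sum of the corresponding torus-invariant prime divisors. A partition $\Sigma_Y(1)=E_1\sqcup\dots\sqcup E_r\sqcup F$ of the rays is a Fano nef partition if $D_F$ is an ample ($\mathbb{Q}$-Cartier) divisor and each $D_i:=D_{E_i}$ is a nef $\mathbb{Q}$-Cartier divisor. *)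

From HB Require Import structures.
From mathcomp Require Import all_boot all_order all_algebra.
Set Implicit Arguments. Unset Strict Implicit. Unset Printing Implicit Defensive.
Import Order.TTheory GRing.Theory Num.Theory.
Local Open Scope ring_scope.

(* Lattice N = Z^n, N_Q = Q^n (row vectors); M_Q = dual, paired by dot product. *)
Definition dotQ (n : nat) (m x : 'rV[rat]_n) : rat := \sum_(j < n) m ord0 j * x ord0 j.

Definition toQ (n : nat) (u : 'rV[int]_n) : 'rV[rat]_n := map_mx (fun z : int => z%:~R) u.

Definition primitive (n : nat) (u : 'rV[int]_n) : Prop :=
  u != 0 /\ forall (k : int) (w : 'rV[int]_n), u = k *: w -> `|k| = 1.

(* The rays of the fan are indexed by a finite type I, with primitive generators v i.
   A cone is given by the set S of (indices of) its rays. *)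
Definition in_cone (n : nat) (I : finType) (v : I -> 'rV[int]_n) (S : {set I})
    (x : 'rV[rat]_n) : Prop :=
  exists lam : I -> rat, (forall i, 0 <= lam i) /\ (forall i, i \notin S -> lam i = 0) /\
    x = \sum_i lam i *: toQ (v i).

Definition is_face_of (n : nat) (C F : 'rV[rat]_n -> Prop) : Prop :=
  exists m : 'rV[rat]_n, (forall x, C x -> 0 <= dotQ m x) /\
    (forall x, F x <-> (C x /\ dotQ m x = 0)).

Definition is_fan (n : nat) (I : finType) (v : I -> 'rV[int]_n) (Sigma : {set {set I}}) : Prop :=
  [/\ (forall i, primitive (v i)), injective v & (forall i, [set i] \in Sigma)] /\
  [/\
      (* each S is the minimal generating set of its cone: its rays are exactly S *)
      (forall S, S \in Sigma -> forall i, i \in S -> ~ in_cone v (S :\ i) (toQ (v i))),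
      (forall S, S \in Sigma -> forall x, in_cone v S x -> in_cone v S (- x) -> x = 0),
      (forall S, S \in Sigma -> forall Fc, is_face_of (in_cone v S) Fc ->
          exists2 T, T \in Sigma & forall x, Fc x <-> in_cone v T x) &
      (forall S T, S \in Sigma -> T \in Sigma ->
          is_face_of (in_cone v S) (fun x => in_cone v S x /\ in_cone v T x) /\
          is_face_of (in_cone v T) (fun x => in_cone v S x /\ in_cone v T x))].

Definition complete_fan (n : nat) (I : finType) (v : I -> 'rV[int]_n) (Sigma : {set {set I}}) : Prop :=
  forall x : 'rV[rat]_n, exists2 S, S \in Sigma & in_cone v S x.

Definition maximal_cone (I : finType) (Sigma : {set {set I}}) (S : {set I}) : Prop :=
  S \in Sigma /\ forall T, T \in Sigma -> S \subset T -> T = S.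

(* torus-invariant Q-divisor D = sum_i a i D_i; D_E = sum_{i in E} D_i *)
Definition D_of (I : finType) (E : {set I}) : I -> rat := fun i => if i \in E then 1 else 0.

(* Toric criteria (complete fan; Cox–Little–Schenck Thm 6.1.14, 6.3.12), stated through
   the Cartier data m_sigma (<m_sigma, v_i> = -a_i for i in sigma(1)) of the Q-Cartier
   divisor on maximal cones; existence of this data is the Q-Cartier condition. *)
Definition nef_QCartier (n : nat) (I : finType) (v : I -> 'rV[int]_n) (Sigma : {set {set I}})
    (a : I -> rat) : Prop :=
  forall S, maximal_cone Sigma S -> exists m : 'rV[rat]_n,
    (forall i, i \in S -> dotQ m (toQ (v i)) = - a i) /\
    (forall i, - a i <= dotQ m (toQ (v i))).

Definition ample_QCartier (n : nat) (I : finType) (v : I -> 'rV[int]_n) (Sigma : {set {set I}})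
    (a : I -> rat) : Prop :=
  forall S, maximal_cone Sigma S -> exists m : 'rV[rat]_n,
    (forall i, i \in S -> dotQ m (toQ (v i)) = - a i) /\
    (forall i, i \notin S -> - a i < dotQ m (toQ (v i))).

Definition ray_partition (I : finType) (r : nat) (E : 'I_r -> {set I}) (F : {set I}) : Prop :=
  [/\ (forall i j, i != j -> [disjoint E i & E j]),
      (forall i, [disjoint E i & F]) &
      (\bigcup_(i < r) E i) :|: F = [set: I]].

Definition fano_nef_partition (n : nat) (I : finType) (v : I -> 'rV[int]_n)
    (Sigma : {set {set I}}) (r : nat) (E : 'I_r -> {set I}) (F : {set I}) : Prop :=
  [/\ ray_partition E F,
      ample_QCartier v Sigma (D_of F) &
      (forall i, nef_QCartier v Sigma (D_of (E i)))].

Definition gorenstein_cone (n : nat) (I : finType) (v : I -> 'rV[int]_n) (S : {set I}) : Prop :=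
  exists m : 'rV[rat]_n, forall i, i \in S -> dotQ m (toQ (v i)) = 1.

From HB Require Import structures.
From mathcomp Require Import all_boot all_order all_algebra.
From mathcomp Require Import ring.
Set Implicit Arguments. Unset Strict Implicit. Unset Printing Implicit Defensive.
Import Order.TTheory GRing.Theory Num.Theory.
Local Open Scope ring_scope.

(* Let G be the union of the E_i, so that F is its complement. Take a maximal cone
   S containing the point x = sum_{i in G} v_i and the ample data m_F of D_F on S.
   On the cone S, m_F equals minus a nonnegative combination of the coefficients
   of D_F, so <m_F, x> <= 0; but D_F vanishes on G, so ampleness makes every
   <m_F, v_i> with i in G nonnegative, and strictly positive unless i is a ray of S.
   Hence G is contained in S, and -m_F is nonnegative on S and vanishes exactly on
   the rays in G: the cone spanned by G is a face of S, hence a cone of the fan.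
   Summing the nef data of the D_{E_i} on S gives the Gorenstein function. *)

Section Lattice.

Variable n : nat.

Lemma toQ_inj : injective (@toQ n).
Proof.
move=> u w /matrixP eq_uw; apply/matrixP => i j.
by have := eq_uw i j; rewrite !mxE => /intr_inj.
Qed.

Lemma toQ_eq0 (u : 'rV[int]_n) : (toQ u == 0) = (u == 0).
Proof.
have toQ0 : toQ (0 : 'rV[int]_n) = 0 by apply/matrixP => i j; rewrite !mxE.
by rewrite -toQ0 (inj_eq toQ_inj).
Qed.

Lemma primitive_dvdz (u : 'rV[int]_n) (p : int) :
  primitive u -> 0 < p -> (forall j, (p %| u ord0 j)%Z) -> p = 1.
Proof.
move=> [_ prim_u] p_gt0 p_dvd.
have u_eq : u = p *: map_mx (fun z => (z %/ p)%Z) u.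
  by apply/matrixP => i j; rewrite !mxE (ord1 i) mulrC divzK.
by have := prim_u p _ u_eq; rewrite gtr0_norm.
Qed.

(* Writing mu = p / q in lowest terms, q u = p w forces p to divide u and q to divide w. *)
Lemma primitive_eq_scale (u w : 'rV[int]_n) (mu : rat) :
  primitive u -> primitive w -> 0 < mu -> toQ u = mu *: toQ w -> u = w.
Proof.
move=> prim_u prim_w mu_gt0 eq_uw.
set p := numq mu; set q := denq mu.
have cop_pq : coprimez p q by rewrite coprimezE coprime_num_den.
have cop_qp : coprimez q p by rewrite coprimezE coprime_sym -coprimezE.
have scale_eq j : q * u ord0 j = p * w ord0 j.
  move/matrixP: eq_uw => /(_ ord0 j); rewrite !mxE => eq_j.
  apply: (@intr_inj rat); rewrite !intrM eq_j -{1}(divq_num_den mu) -/p -/q.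
  have : (q%:~R : rat) != 0 by rewrite intr_eq0 gt_eqF ?denq_gt0.
  by move=> q_neq0; field.
have p1 : p = 1.
  apply: (primitive_dvdz prim_u); first by rewrite /p numq_gt0.
  by move=> j; rewrite -(Gauss_dvdzr _ cop_pq) scale_eq dvdz_mulr.
have q1 : q = 1.
  apply: (primitive_dvdz prim_w); first exact: denq_gt0.
  by move=> j; rewrite -(Gauss_dvdzr _ cop_qp) -scale_eq dvdz_mulr.
apply/matrixP => i k; rewrite (ord1 i).
by have := scale_eq k; rewrite p1 q1 !mul1r.
Qed.

Lemma dotQDr (m x y : 'rV[rat]_n) : dotQ m (x + y) = dotQ m x + dotQ m y.
Proof. by rewrite /dotQ -big_split; apply: eq_bigr => j _; rewrite mxE mulrDr. Qed.

Lemma dotQ0r (m : 'rV[rat]_n) : dotQ m 0 = 0.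
Proof. by rewrite /dotQ big1 // => j _; rewrite mxE mulr0. Qed.

Lemma dotQZr (m x : 'rV[rat]_n) c : dotQ m (c *: x) = c * dotQ m x.
Proof. by rewrite /dotQ mulr_sumr; apply: eq_bigr => j _; rewrite mxE mulrCA. Qed.

Lemma dotQ_sumr (J : finType) (P : pred J) (m : 'rV[rat]_n) (x : J -> 'rV[rat]_n) :
  dotQ m (\sum_(k | P k) x k) = \sum_(k | P k) dotQ m (x k).
Proof. exact: (big_morph _ (dotQDr m) (dotQ0r m)). Qed.

Lemma dotQDl (m1 m2 x : 'rV[rat]_n) : dotQ (m1 + m2) x = dotQ m1 x + dotQ m2 x.
Proof. by rewrite /dotQ -big_split; apply: eq_bigr => j _; rewrite mxE mulrDl. Qed.

Lemma dotQ0l (x : 'rV[rat]_n) : dotQ 0 x = 0.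
Proof. by rewrite /dotQ big1 // => j _; rewrite mxE mul0r. Qed.

Lemma dotQNl (m x : 'rV[rat]_n) : dotQ (- m) x = - dotQ m x.
Proof. by rewrite /dotQ -sumrN; apply: eq_bigr => j _; rewrite mxE mulNr. Qed.

Lemma dotQ_suml (J : finType) (m : J -> 'rV[rat]_n) (x : 'rV[rat]_n) :
  dotQ (\sum_k m k) x = \sum_k dotQ (m k) x.
Proof. exact: (big_morph _ (fun a b => dotQDl a b x) (dotQ0l x)). Qed.

End Lattice.

Section Cones.

Variables (n : nat) (I : finType) (v : I -> 'rV[int]_n).

Lemma dotQ_cone (m : 'rV[rat]_n) (lam : I -> rat) :
  dotQ m (\sum_i lam i *: toQ (v i)) = \sum_i lam i * dotQ m (toQ (v i)).
Proof. by rewrite dotQ_sumr; apply: eq_bigr => i _; rewrite dotQZr. Qed.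

Lemma in_cone_subset (S T : {set I}) x :
  S \subset T -> in_cone v S x -> in_cone v T x.
Proof.
move=> sST [lam [lam_ge0 [lam_out ->]]]; exists lam; do 2!split=> //.
by move=> i iNT; apply: lam_out; apply: contra iNT; apply: (subsetP sST).
Qed.

Lemma in_cone_gen (S : {set I}) j : j \in S -> in_cone v S (toQ (v j)).
Proof.
move=> jS; exists (fun k => (k == j)%:R); split; first by move=> k; case: eqP.
split; first by move=> k; case: eqP => // ->; rewrite jS.
by rewrite (bigD1 j) //= eqxx scale1r big1 ?addr0 // => k /negbTE ->; rewrite scale0r.
Qed.

Lemma in_cone1 i x : in_cone v [set i] x -> exists2 mu, 0 <= mu & x = mu *: toQ (v i).
Proof.
move=> [lam [lam_ge0 [lam_out ->]]]; exists (lam i) => //.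
rewrite (bigD1 i) //= big1 ?addr0 // => j ji.
by rewrite lam_out ?scale0r // in_set1.
Qed.

Lemma dotQ_cartier_cone (S : {set I}) (a : I -> rat) (m : 'rV[rat]_n) (lam : I -> rat) :
  (forall i, i \in S -> dotQ m (toQ (v i)) = - a i) ->
  (forall i, i \notin S -> lam i = 0) ->
  dotQ m (\sum_i lam i *: toQ (v i)) = - \sum_i lam i * a i.
Proof.
move=> m_S lam_out; rewrite dotQ_cone -sumrN; apply: eq_bigr => i _.
by have [/m_S ->|/lam_out ->] := boolP (i \in S); rewrite ?mulrN ?mul0r ?oppr0.
Qed.

Lemma is_face_of_zero_set (S G : {set I}) (m : 'rV[rat]_n) :
  G \subset S ->
  (forall i, i \in S -> 0 <= dotQ m (toQ (v i))) ->
  (forall i, i \in S -> (dotQ m (toQ (v i)) == 0) = (i \in G)) ->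
  is_face_of (in_cone v S) (in_cone v G).
Proof.
move=> sGS m_ge0 m_eq0.
have term_ge0 lam : (forall i, 0 <= lam i) -> (forall i, i \notin S -> lam i = 0) ->
    forall i, 0 <= lam i * dotQ m (toQ (v i)).
  move=> lam_ge0 lam_out i; have [iS|/lam_out ->] := boolP (i \in S).
    by rewrite mulr_ge0 ?m_ge0.
  by rewrite mul0r.
exists m; split.
  move=> _ [lam [lam_ge0 [lam_out ->]]]; rewrite dotQ_cone.
  by apply: sumr_ge0 => i _; apply: term_ge0.
move=> x; split=> [x_G|[[lam [lam_ge0 [lam_out x_eq]]]]].
  split; first exact: in_cone_subset x_G.
  move: x_G => [lam [_ [lam_out ->]]]; rewrite dotQ_cone big1 // => i _.
  have [iG|/lam_out ->] := boolP (i \in G); last by rewrite mul0r.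
  by have /eqP -> := etrans (m_eq0 _ (subsetP sGS i iG)) iG; rewrite mulr0.
rewrite x_eq dotQ_cone => /(psumr_eq0P (fun j _ => term_ge0 _ lam_ge0 lam_out j)) term_eq0.
exists lam; do 2!split=> //; move=> i iNG.
have := term_eq0 i isT.
have [iS|/lam_out //] := boolP (i \in S).
by move/eqP; rewrite mulf_eq0 m_eq0 // (negbTE iNG) orbF => /eqP.
Qed.

End Cones.

Section Fan.

Variables (n : nat) (I : finType) (v : I -> 'rV[int]_n) (Sigma : {set {set I}}).
Hypothesis fan : is_fan v Sigma.

(* The common face of the cone over S and of the ray through v_i is spanned by
   some v_j with j in S, which primitivity forces to be v_i itself. *)
Lemma fan_ray_mem (S : {set I}) i :
  S \in Sigma -> in_cone v S (toQ (v i)) -> i \in S.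
Proof.
have [[prim inj singl] [_ _ _ inter]] := fan.
move=> SS vi_S; have [[m [m_ge0 m_face]] _] := inter S [set i] SS (singl i).
have [lam [lam_ge0 [lam_out vi_eq]]] := vi_S.
have m_vi : dotQ m (toQ (v i)) = 0.
  by have /m_face [] := conj vi_S (in_cone_gen v (set11 i)).
have term_eq0 j : lam j * dotQ m (toQ (v j)) = 0.
  have term_ge0 k : true -> 0 <= lam k * dotQ m (toQ (v k)).
    have [kS _|/lam_out -> _] := boolP (k \in S); last by rewrite mul0r.
    by rewrite mulr_ge0 // m_ge0 //; apply: in_cone_gen.
  by move: m_vi; rewrite {1}vi_eq dotQ_cone => /(psumr_eq0P term_ge0) ->.
have [j /= lam_j|lam0] := pickP (fun j => lam j != 0); last first.
  have [+ _] := prim i; rewrite -toQ_eq0 vi_eq big1 ?eqxx // => j _.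
  by have /negbFE/eqP -> := lam0 j; rewrite scale0r.
have jS : j \in S by apply: contraR lam_j => /lam_out ->.
have m_vj : dotQ m (toQ (v j)) = 0.
  by have /eqP := term_eq0 j; rewrite mulf_eq0 (negbTE lam_j) => /eqP.
have [_ /in_cone1 [mu mu_ge0 vj_eq]] :
    in_cone v S (toQ (v j)) /\ in_cone v [set i] (toQ (v j)).
  by apply/m_face; split; [apply: in_cone_gen | ].
have mu_gt0 : 0 < mu.
  rewrite lt_def mu_ge0 andbT; apply: contraTneq isT => mu0.
  by have [+ _] := prim j; rewrite -toQ_eq0 vj_eq mu0 scale0r eqxx.
by have /inj <- := primitive_eq_scale (prim j) (prim i) mu_gt0 vj_eq.
Qed.

Lemma fan_face_mem (S G : {set I}) :
  S \in Sigma -> G \subset S -> is_face_of (in_cone v S) (in_cone v G) -> G \in Sigma.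
Proof.
have [_ [min_gen _ faces _]] := fan.
move=> SS sGS /(faces S SS) [T TS cone_GT].
suff -> : G = T by [].
apply/setP => i; apply/idP/idP => [iG|iT]; first by apply/fan_ray_mem/cone_GT/in_cone_gen.
have /cone_GT vi_G := in_cone_gen v iT.
have iS : i \in S by apply/(fan_ray_mem SS)/(in_cone_subset sGS).
apply: contraT => iNG; case: (min_gen S SS i iS); apply: in_cone_subset vi_G.
by apply/subsetP => j jG; rewrite !inE (subsetP sGS) // andbT; apply: contraNneq iNG => <-.
Qed.

End Fan.

Lemma exists_maximal_cone (I : finType) (Sigma : {set {set I}}) S :
  S \in Sigma -> exists2 T, maximal_cone Sigma T & S \subset T.
Proof.
move=> SS; pose above := [set T in Sigma | S \subset T].
have S_above : S \in above by rewrite inE SS subxx.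
have [T] := @arg_maxnP _ S (mem above) (fun T : {set I} => #|T|) S_above.
move=> /= /setIdP [TS sST] T_max; exists T => //; split=> // T' T'S sTT'.
apply/eqP; rewrite eq_sym eqEcard sTT' /=; apply: T_max.
by rewrite /= inE T'S (subset_trans sST sTT').
Qed.

Lemma ray_partition_compl (I : finType) r (E : 'I_r -> {set I}) F :
  ray_partition E F -> F = ~: \bigcup_(k < r) E k.
Proof.
move=> [_ disjEF cover]; apply/setP => i; rewrite in_setC.
apply/idP/idP => [iF|iNG].
  by apply/bigcupP => -[k _ ik]; rewrite (disjointFr (disjEF k) ik) in iF.
by have : i \in [set: I] by []; rewrite -cover inE (negbTE iNG).
Qed.

Section AmpleZeroSet.

Variables (n : nat) (I : finType) (v : I -> 'rV[int]_n).
Variables (S G : {set I}) (a : I -> rat) (m : 'rV[rat]_n).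
Hypotheses (a_ge0 : forall i, 0 <= a i) (a_G : forall i, i \in G -> a i = 0).
Hypotheses (m_S : forall i, i \in S -> dotQ m (toQ (v i)) = - a i)
           (m_out : forall i, i \notin S -> - a i < dotQ m (toQ (v i))).

Lemma ample_zero_set_subset : in_cone v S (\sum_(i in G) toQ (v i)) -> G \subset S.
Proof.
move=> [lam [lam_ge0 [lam_out x_eq]]].
have term_ge0 i : i \in G -> 0 <= dotQ m (toQ (v i)).
  move=> iG; have [iS|/m_out] := boolP (i \in S); first by rewrite m_S ?a_G ?oppr0.
  by rewrite a_G // oppr0 => /ltW.
have sum_le0 : \sum_(i in G) dotQ m (toQ (v i)) <= 0.
  rewrite -dotQ_sumr x_eq (dotQ_cartier_cone m_S lam_out) oppr_le0.
  by apply: sumr_ge0 => i _; rewrite mulr_ge0.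
have /psumr_eq0P term_eq0 : \sum_(i in G) dotQ m (toQ (v i)) = 0.
  by apply/eqP; rewrite eq_le sum_le0 sumr_ge0.
apply/subsetP => i iG; apply: contraT => /m_out.
by rewrite a_G // oppr0 term_eq0 // ?ltxx.
Qed.

Lemma ample_zero_set_face : G \subset S ->
  (forall i, i \in S -> (a i == 0) = (i \in G)) ->
  is_face_of (in_cone v S) (in_cone v G).
Proof.
move=> sGS a_eq0; apply: (is_face_of_zero_set (m := - m)) => // i iS.
  by rewrite dotQNl m_S // opprK.
by rewrite dotQNl m_S // opprK a_eq0.
Qed.

End AmpleZeroSet.

(* The nef data of the D_{E_k} on a cone containing all the E_k add up to minus
   the indicator function of their (disjoint) union. *)
Lemma nef_partition_gorenstein (n : nat) (I : finType) (v : I -> 'rV[int]_n)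
    (Sigma : {set {set I}}) r (E : 'I_r -> {set I}) (S : {set I}) :
  (forall k l, k != l -> [disjoint E k & E l]) ->
  (forall k, nef_QCartier v Sigma (D_of (E k))) ->
  maximal_cone Sigma S -> \bigcup_(k < r) E k \subset S ->
  gorenstein_cone v (\bigcup_(k < r) E k).
Proof.
move=> disjE nef Smax sGS.
have [m m_S] := fin_all_exists (fun k => nef k S Smax).
exists (- \sum_k m k) => i iG.
rewrite dotQNl dotQ_suml -sumrN.
under eq_bigr => k _ do rewrite (proj1 (m_S k)) ?(subsetP sGS) // opprK.
have /bigcupP [k _ ik] := iG.
rewrite (bigD1 k) //= big1 ?addr0 => [|l lk]; first by rewrite /D_of ik.
by rewrite /D_of; case: ifP => // il; rewrite (disjointFr (disjE l k lk) il) in ik.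
Qed.

Theorem lemma11p4 (n : nat) (I : finType) (v : I -> 'rV[int]_n) (Sigma : {set {set I}})
    (r : nat) (E : 'I_r -> {set I}) (F : {set I}) :
  is_fan v Sigma -> complete_fan v Sigma ->
  fano_nef_partition v Sigma E F ->
  exists2 sigma, sigma \in Sigma &
    sigma = \bigcup_(i < r) E i /\ gorenstein_cone v sigma.
Proof.
move=> fan complete [partition ample nef]; have [disjE _ _] := partition.
set G := \bigcup_(k < r) E k.
have D_F i : D_of F i = (i \notin G)%:R.
  by rewrite (ray_partition_compl partition) /D_of in_setC; case: (i \in G).
have D_F_ge0 i : 0 <= D_of F i by rewrite D_F ler0n.
have D_F_G i : i \in G -> D_of F i = 0 by rewrite D_F => ->.
have [S0 S0_fan x_S0] := complete (\sum_(i in G) toQ (v i)).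
have [S Smax sS0S] := exists_maximal_cone S0_fan.
have [mF [mF_S mF_out]] := ample S Smax.
have sGS : G \subset S.
  exact: (ample_zero_set_subset D_F_ge0 D_F_G mF_S mF_out (in_cone_subset sS0S x_S0)).
have G_face : is_face_of (in_cone v S) (in_cone v G).
  by apply: (ample_zero_set_face D_F_ge0 mF_S) => // i _; rewrite D_F pnatr_eq0 eqb0 negbK.
exists G; first exact: (fan_face_mem fan Smax.1 sGS G_face).
by split=> //; apply: (nef_partition_gorenstein disjE nef Smax sGS).
Qed.
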